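(* Let $S\in\mathbb{R}_{\geq 0}^{[m]\times[N]}$ be a matrix with non-negative entries. Then \[\mathrm{rk}_+(S)=\min\{|\Gamma(\pi)| : \pi\in\mathrm{Prot}_+(S)\}.\]
   Context: $\mathrm{rk}_+(S)$ is the non-negative rank: the least $r$ such that $S=UW$ with $U\in\mathbb{R}_{\ge0}^{m\times r}$, $W\in\mathbb{R}_{\ge 0}^{r\times N}$. A Markovian protocol $\pi$ in $k\ge 1$ rounds between Alice (who receives an input $i\in[m]$) and Bob (who receives an input $j\in[N]$) is given by: finite sets $V_1,\dots,V_k$ of messages; a first speaker $D_1\in\{A,B\}$, the speakers alternating thereafter ($D_{t+1}\neq D_t$); for the first speaker an initial probability distribution $p^0_{D_1,z}$ on $V_1$ depending on his/her input $z$; for $1\le t\le k-1$, transition probabilities $p^{(t)}_{D_{t+1},z}(u_t,\cdot)$, a probability distribution on $V_{t+1}$ used by the party $D_{t+1}$ with input $z$ after receiving message $u_t$; and finally the party $D_{k+1}$ (the one who received $u_k$) claims an output $\omega\ge 0$ drawn from a distribution on $[0,\infty)$ depending only on his/her input and on $u_k$, with finite mean $\bar\omega_{D_{k+1},z}(u_k)$. (Protocols with either party as first speaker are allowed.) The average output on inputs $(i,j)$ is \[\mathbb{E}[\omega\mid i,j]=\sum_{(u_1,\dots,u_k)} p^0_{D_1,z_1}(u_1)\prod_{t=1}^{k-1}p^{(t)}_{D_{t+1},z_{t+1}}(u_t,u_{t+1})\,\bar\omega_{D_{k+1},z_{k+1}}(u_k),\] where $z_s=i$ if $D_s=A$ and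 $z_s=j$ if $D_s=B$. For $\gamma=(u_1,\dots,u_k)$, let $A_{i,\gamma}$ be the product of those factors in the summand for $\gamma$ belonging to Alice (i.e. depending on her input $i$) and $B_{\gamma,j}$ the product of the factors belonging to Bob, so the summand is $A_{i,\gamma}B_{\gamma,j}$. The protocol is correct for $S$ if for all $(i,j)$ the output is non-negative with probability $1$ and $\mathbb{E}[\omega\mid i,j]=S_{i,j}$; $\mathrm{Prot}_+(S)$ is the set of Markovian protocols correct for $S$. The width is $|\Gamma(\pi)|$, where $\Gamma(\pi)=\{\gamma\in V_1\times\cdots\times V_k : \exists i\in[m],\exists j\in[N],\ A_{i,\gamma}B_{\gamma,j}>0\}$. *)

From HB Require Import structures.
From mathcomp Require Import all_boot all_order all_algebra.
From mathcomp Require Import all_classical all_reals all_analysis.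
Set Implicit Arguments. Unset Strict Implicit. Unset Printing Implicit Defensive.
Import Order.TTheory GRing.Theory Num.Theory.
Local Open Scope classical_set_scope.
Local Open Scope ring_scope.

Section Defs.
Variable R : realType.

Definition nonneg_fact (m N : nat) (S : 'M[R]_(m, N)) (r : nat) : Prop :=
  exists (U : 'M[R]_(m, r)) (W : 'M[R]_(r, N)),
    [/\ (forall i k, 0 <= U i k), (forall k j, 0 <= W k j) & S = U *m W].

Lemma nonneg_fact_ex_asbool m N (S : 'M[R]_(m, N)) :
  (exists r, nonneg_fact S r) -> exists r, `[< nonneg_fact S r >].
Proof. by case=> r h; exists r; apply/asboolP. Qed.

(* rk_+(S): least r admitting a non-negative factorization S = U W
   (set to 0 when no such factorization exists, which never happens
   for a non-negative S). *)
Definition nonneg_rank m N (S : 'M[R]_(m, N)) : nat :=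
  match pselect (exists r, nonneg_fact S r) with
  | left e => ex_minn (nonneg_fact_ex_asbool e)
  | right _ => 0%N
  end.

(* Speaker of the 0-indexed step s (message u_{s+1} is sent at step s,
   the output is claimed at step k = K.+1); [af] = "Alice speaks first". *)
Definition isA (af : bool) (s : nat) : bool := if odd s then ~~ af else af.

Definition inp (m N : nat) (b : bool) : Type := if b then 'I_m else 'I_N.

Definition sel (m N : nat) (b : bool) (i : 'I_m) (j : 'I_N) : inp m N b :=
  if b as b0 return inp m N b0 then i else j.

(* k = K.+1 rounds; message set V_{t+1} = 'I_(n t) for t : 'I_K.+1. *)
Record protocol (m N K : nat) (n : 'I_K.+1 -> nat) (af : bool) := Protocol {
  p_init : inp m N (isA af 0) -> 'I_(n ord0) -> R;
  p_trans : forall t : 'I_K, inp m N (isA af t.+1) ->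
            'I_(n (widen_ord (leqnSn K) t)) -> 'I_(n (lift ord0 t)) -> R;
  p_out : inp m N (isA af K.+1) -> 'I_(n ord_max) -> probability R R
}.
Arguments p_init {m N K n af} _ _ _.
Arguments p_trans {m N K n af} _ _ _ _ _.
Arguments p_out {m N K n af} _ _ _.

Section Prot.
Variables (m N K : nat) (n : 'I_K.+1 -> nat) (af : bool).
Variable pi : @protocol m N K n af.

Definition mean (P : probability R R) : R := fine (\int[P]_x (x%:E))%E.

Definition wf_protocol : Prop :=
  [/\ (forall z u, 0 <= p_init pi z u),
      (forall z, \sum_u p_init pi z u = 1),
      (forall t z u v, 0 <= p_trans pi t z u v),
      (forall t z u, \sum_v p_trans pi t z u v = 1) &
      (forall z u, p_out pi z u `[0, +oo[%classic = 1%E) /\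
      (forall z u, (p_out pi z u).-integrable setT (fun x : R => x%:E))].

Definition path := {dffun forall t : 'I_K.+1, 'I_(n t)}.

Definition summand (i : 'I_m) (j : 'I_N) (g : path) : R :=
  p_init pi (sel (isA af 0) i j) (g ord0) *
  (\prod_(t < K) p_trans pi t (sel (isA af t.+1) i j)
                   (g (widen_ord (leqnSn K) t)) (g (lift ord0 t))) *
  mean (p_out pi (sel (isA af K.+1) i j) (g ord_max)).

Definition expected_output (i : 'I_m) (j : 'I_N) : R :=
  \sum_(g : path) summand i j g.

Definition Gamma : {set path} :=
  [set g : path | [exists i : 'I_m, [exists j : 'I_N, 0 < summand i j g]]].

Definition width : nat := #|Gamma|.

Definition correct (S : 'M[R]_(m, N)) : Prop :=
  wf_protocol /\ forall i j, expected_output i j = S i j.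

End Prot.
End Defs.

From Pilot Require Import Defs.
From HB Require Import structures.
From mathcomp Require Import all_boot all_order all_algebra.
From mathcomp Require Import all_classical all_reals all_analysis.
From mathcomp Require Import measurable_realfun ring lra.
Import Order.TTheory GRing.Theory Num.Theory.
Local Open Scope ring_scope.
Set Implicit Arguments. Unset Strict Implicit. Unset Printing Implicit Defensive.

(* Each summand of E[omega | i, j] splits as A_{i,g} B_{g,j} with non-negative
   factors, and only the transcripts g in Gamma(pi) contribute, so A and B
   restricted to Gamma(pi) are a non-negative factorization of S of inner size
   |Gamma(pi)|.  Conversely, given S = U W with U, W >= 0 of inner size r, let
   Alice send k < r with probability U_{ik} / c, and a dummy message with the
   remaining probability, where c exceeds every row sum of U; Bob claims
   c W_{kj} on message k and 0 on the dummy one.  This one-round protocol is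
   correct and only the r real messages can occur in Gamma. *)

Section Mean.
Variable R : realType.

Lemma mean_ge0 (P : probability R R) :
  P `[0, +oo[%classic = 1%E -> P.-integrable setT (fun x : R => x%:E) ->
  0 <= mean P.
Proof.
move=> P1 Pint; rewrite /mean; apply: fine_ge0.
set A : set R := `[0, +oo[%classic.
have mA : measurable A by exact: measurable_itv.
rewrite (@negligible_integral _ _ _ _ _ (~` A)) //.
- apply: integral_ge0 => x [_ /=] /contrapT.
  by rewrite /A /= in_itv /= andbT lee_fin.
- exact: measurableC.
- by have := probability_setC P mA; rewrite P1 subee.
Qed.

Lemma mean_dirac (a : R) : mean (\d_a : probability R R) = a.
Proof. by rewrite /mean integral_dirac //= ?diracT ?mul1e indicT /= mul1r. Qed.

Lemma dirac_integrable_id (a : R) :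
  (\d_a : probability R R).-integrable setT (fun x : R => x%:E).
Proof.
apply/integrableP; split; first exact: EFin_measurable.
rewrite integral_dirac //=; last exact: measurableT_comp.
by rewrite diracT mul1e ltry.
Qed.

End Mean.

Section NonnegRank.
Variables (R : realType) (m N : nat).
Implicit Types (S : 'M[R]_(m, N)) (r : nat).

Lemma nonneg_rank_min S r : nonneg_fact S r -> (nonneg_rank S <= r)%N.
Proof.
rewrite /nonneg_rank => Sr; case: pselect => [e|//].
by case: ex_minnP => k _; apply; apply/asboolP.
Qed.

Lemma nonneg_fact_rank S : (forall i j, 0 <= S i j) -> nonneg_fact S (nonneg_rank S).
Proof.
move=> S_ge0; rewrite /nonneg_rank; case: pselect => [e|[]].
  by case: ex_minnP => k /asboolP.
exists N, S, 1%:M; split=> // [k j|]; last by rewrite mulmx1.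
by rewrite mxE; case: eqP.
Qed.

Lemma nonneg_fact_sum (T : finType) (G : {set T})
    (A : 'I_m -> T -> R) (B : T -> 'I_N -> R) S :
  (forall i g, 0 <= A i g) -> (forall g j, 0 <= B g j) ->
  (forall i j, S i j = \sum_(g in G) A i g * B g j) -> nonneg_fact S #|G|.
Proof.
move=> A_ge0 B_ge0 SE.
exists (\matrix_(i, k) A i (enum_val k)), (\matrix_(k, j) B (enum_val k) j).
split=> [i k|k j|]; rewrite ?mxE //.
apply/matrixP => i j; rewrite SE !mxE big_enum_val.
by apply: eq_bigr => k _; rewrite !mxE.
Qed.

End NonnegRank.

Section PartyFactors.
Variables (R : realType) (m N : nat).

Definition alice_factor (b : bool) : (inp m N b -> R) -> 'I_m -> R :=
  if b as b0 return (inp m N b0 -> R) -> 'I_m -> R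
  then fun P i => P i else fun _ _ => 1.

Definition bob_factor (b : bool) : (inp m N b -> R) -> 'I_N -> R :=
  if b as b0 return (inp m N b0 -> R) -> 'I_N -> R
  then fun _ _ => 1 else fun P j => P j.

Lemma sel_factor b (P : inp m N b -> R) i j :
  P (sel b i j) = alice_factor P i * bob_factor P j.
Proof. by case: b P => P /=; rewrite ?mulr1 ?mul1r. Qed.

Lemma alice_factor_ge0 b (P : inp m N b -> R) i :
  (forall z, 0 <= P z) -> 0 <= alice_factor P i.
Proof. by case: b P. Qed.

Lemma bob_factor_ge0 b (P : inp m N b -> R) j :
  (forall z, 0 <= P z) -> 0 <= bob_factor P j.
Proof. by case: b P. Qed.

End PartyFactors.

Section WidthLowerBound.
Variables (R : realType) (m N K : nat) (n : 'I_K.+1 -> nat) (af : bool).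
Variable pi : protocol R m N n af.

Definition path_weight (F : forall b, (inp m N b -> R) -> R) (g : Defs.path n) : R :=
  F _ (fun z => p_init pi z (g ord0)) *
  (\prod_(t < K) F _ (fun z => p_trans pi (t:=t) z
                       (g (widen_ord (leqnSn K) t)) (g (lift ord0 t)))) *
  F _ (fun z => mean (p_out pi z (g ord_max))).

Definition alice_weight i := path_weight (fun b P => alice_factor P i).
Definition bob_weight g j := path_weight (fun b P => bob_factor P j) g.

Lemma summand_factor i j g : summand pi i j g = alice_weight i g * bob_weight g j.
Proof.
rewrite /summand /alice_weight /bob_weight /path_weight.
rewrite (sel_factor (fun z => p_init pi z _)).
rewrite (sel_factor (fun z => mean (p_out pi z _))).
under eq_bigr => t _ do rewrite (sel_factor (fun z => p_trans pi z _ _)).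
by rewrite big_split /=; ring.
Qed.

Hypothesis pi_wf : wf_protocol pi.

Lemma path_weight_ge0 (F : forall b, (inp m N b -> R) -> R) g :
  (forall b (P : inp m N b -> R), (forall z, 0 <= P z) -> 0 <= F b P) ->
  0 <= path_weight F g.
Proof.
case: pi_wf => init_ge0 _ trans_ge0 _ [out_ge0 out_int] F_ge0.
rewrite /path_weight !mulr_ge0 ?F_ge0 //; last by move=> z; apply: mean_ge0.
by apply: prodr_ge0 => t _; apply: F_ge0.
Qed.

Lemma summand_ge0 i j g : 0 <= summand pi i j g.
Proof.
rewrite summand_factor mulr_ge0 // path_weight_ge0 // => b P.
  exact: alice_factor_ge0.
exact: bob_factor_ge0.
Qed.

Lemma expected_output_Gamma i j :
  expected_output pi i j = \sum_(g in Gamma pi) summand pi i j g.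
Proof.
rewrite [RHS]big_mkcond; apply: eq_bigr => g _; case: ifPn => // g_notin.
apply/eqP; rewrite eq_le summand_ge0 andbT leNgt; apply: contra g_notin => pos.
by rewrite inE; apply/existsP; exists i; apply/existsP; exists j.
Qed.

Lemma nonneg_fact_width (S : 'M[R]_(m, N)) :
  (forall i j, expected_output pi i j = S i j) -> nonneg_fact S (width pi).
Proof.
move=> SE; apply: (nonneg_fact_sum (A := alice_weight) (B := bob_weight)).
- by move=> i g; apply: path_weight_ge0 => b P; apply: alice_factor_ge0.
- by move=> g j; apply: path_weight_ge0 => b P; apply: bob_factor_ge0.
- move=> i j; rewrite -SE expected_output_Gamma.
  by apply: eq_bigr => g _; rewrite summand_factor.
Qed.

End WidthLowerBound.

Lemma nonneg_rank_le_width (R : realType) m N K (n : 'I_K.+1 -> nat) af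
    (pi : protocol R m N n af) (S : 'M[R]_(m, N)) :
  correct pi S -> (nonneg_rank S <= width pi)%N.
Proof. by case=> pi_wf SE; apply/nonneg_rank_min/(nonneg_fact_width pi_wf). Qed.

Section OneRoundProtocol.
Variables (R : realType) (m N r : nat) (U : 'M[R]_(m, r)) (W : 'M[R]_(r, N)).
Hypotheses (U_ge0 : forall i k, 0 <= U i k) (W_ge0 : forall k j, 0 <= W k j).

Definition row_mass i : R := \sum_k U i k.

Definition scale : R := 1 + \sum_i row_mass i.

Lemma row_mass_ge0 i : 0 <= row_mass i.
Proof. exact: sumr_ge0. Qed.

Lemma scale_gt0 : 0 < scale.
Proof. by rewrite ltr_wpDr // sumr_ge0 // => i _; apply: row_mass_ge0. Qed.

Lemma row_mass_le_scale i : row_mass i <= scale.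
Proof.
rewrite /scale (bigD1 i) //= addrCA lerDl addr_ge0 // sumr_ge0 // => i' _.
exact: row_mass_ge0.
Qed.

(* Message [lift ord0 k] encodes the inner index k; [ord0] is the dummy message. *)
Definition msg_prob (i : 'I_m) (u : 'I_r.+1) : R :=
  if unlift ord0 u is Some k then U i k / scale else 1 - row_mass i / scale.

Definition claim (j : 'I_N) (u : 'I_r.+1) : R :=
  if unlift ord0 u is Some k then scale * W k j else 0.

Definition one_round_protocol : protocol R m N (fun _ : 'I_1 => r.+1) true :=
  @Protocol R m N 0 (fun _ => r.+1) true msg_prob (fun _ _ _ _ => 0)
    (fun j u => \d_(claim j u)).

Lemma msg_prob_ge0 i u : 0 <= msg_prob i u.
Proof.
have c_gt0 := scale_gt0; rewrite /msg_prob; case: unlift => [k|].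
  by rewrite divr_ge0 // ltW.
by rewrite subr_ge0 ler_pdivrMr // mul1r row_mass_le_scale.
Qed.

Lemma msg_prob_sum i : \sum_u msg_prob i u = 1.
Proof.
rewrite big_ord_recl /msg_prob unlift_none.
under eq_bigr do rewrite liftK.
by rewrite -mulr_suml -/(row_mass i); ring.
Qed.

Lemma claim_ge0 j u : 0 <= claim j u.
Proof.
by rewrite /claim; case: unlift => // k; rewrite mulr_ge0 // ltW // scale_gt0.
Qed.

Lemma one_round_wf : wf_protocol one_round_protocol.
Proof.
split=> [||[]//|[]//|]; [exact: msg_prob_ge0 | exact: msg_prob_sum |].
split=> [j u|j u]; last exact: dirac_integrable_id.
by rewrite /= diracE mem_set //= in_itv /= andbT claim_ge0.
Qed.

Let pi := one_round_protocol.

Lemma one_round_summand i j g :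
  summand pi i j g = msg_prob i (g ord0) * claim j (g ord0).
Proof.
rewrite /summand big_ord0 mulr1 /= mean_dirac.
by rewrite (_ : ord_max = ord0) //; apply: val_inj.
Qed.

Local Notation one_round_path := (Defs.path (fun _ : 'I_1 => r.+1)).

Definition const_path (u : 'I_r.+1) : one_round_path := [ffun=> u].

Lemma const_pathK : cancel const_path (fun g : one_round_path => g ord0).
Proof. by move=> u; rewrite ffunE. Qed.

Lemma const_path_ord0 : cancel (fun g : one_round_path => g ord0) const_path.
Proof. by move=> g; apply/ffunP => t; rewrite ffunE (ord1 t). Qed.

Lemma one_round_expected i j : expected_output pi i j = (U *m W) i j.
Proof.
rewrite /expected_output (reindex const_path); last first.
  exists (fun g : one_round_path => g ord0) => [u _|g _].
  - exact: const_pathK.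
  - exact: const_path_ord0.
under eq_bigr do rewrite one_round_summand const_pathK.
rewrite big_ord_recl /claim unlift_none /= mulr0 add0r mxE.
apply: eq_bigr => k _; rewrite /msg_prob liftK.
by field; rewrite gt_eqF // scale_gt0.
Qed.

Lemma one_round_width : (width pi <= r)%N.
Proof.
rewrite /width -(card_imset _ (can_inj const_path_ord0)).
apply: (@leq_trans #|[set~ ord0 : 'I_r.+1]|); last by rewrite cardsC1 card_ord.
apply/subset_leq_card/fintype.subsetP => _ /imsetP[g + ->].
rewrite !inE => /existsP[i /existsP[j]]; rewrite one_round_summand.
by apply: contraTneq => ->; rewrite /claim unlift_none mulr0 ltxx.
Qed.

Lemma one_round_correct : correct pi (U *m W).
Proof. by split; [exact: one_round_wf | exact: one_round_expected]. Qed.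

End OneRoundProtocol.

Unset Implicit Arguments.
Set Strict Implicit.

Theorem proposition1 (R : realType) (m N : nat) (S : 'M[R]_(m, N))
  (hS : forall i j, 0 <= S i j) :
  (exists (K : nat) (n : 'I_K.+1 -> nat) (af : bool)
          (pi : @protocol R m N K n af),
      correct pi S /\ width pi = nonneg_rank S) /\
  (forall (K : nat) (n : 'I_K.+1 -> nat) (af : bool)
          (pi : @protocol R m N K n af),
      correct pi S -> (nonneg_rank S <= width pi)%N).
Proof.
split; last by move=> K n af pi; apply: nonneg_rank_le_width.
have [U [W [U_ge0 W_ge0 SE]]] := nonneg_fact_rank hS.
have pi_correct : correct (one_round_protocol U W) S.
  by rewrite [in X in correct _ X]SE; apply: one_round_correct.
exists 0%N, _, true, (one_round_protocol U W).
split=> //; apply/eqP; rewrite eqn_leq nonneg_rank_le_width // andbT.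
exact: one_round_width.
Qed.
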